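(* Let $\tau$ be a positive random variable with finite mean such that $t\mapsto\mathbb P(\tau\ge t)$ is continuous and $\mathbb P(\tau>t+s)\le\mathbb P(\tau>t)\,\mathbb P(\tau>s)$ for all $t,s\ge0$. Then $\mathbb P(\tau<t)\le e\,t/\mathbb E(\tau)$ for all $t>0$. *)

From Stdlib Require Import Reals.
Open Scope R_scope.

(* A positive random variable tau is described by its law, equivalently by
   its survival function S t = P(tau > t).  The functions arising this way
   are exactly: values in [0,1], nonincreasing, right-continuous, equal to 1
   on (-oo,0] (since P(tau > 0) = 1), and tending to 0 at +oo. *)
Definition survival_pos (S : R -> R) : Prop :=
  (forall t, 0 <= S t <= 1) /\
  (forall x y, x <= y -> S y <= S x) /\
  (forall t, t <= 0 -> S t = 1) /\
  (forall t eps, 0 < eps -> exists d, 0 < d /\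
       forall u, t <= u < t + d -> Rabs (S u - S t) < eps) /\
  (forall eps, 0 < eps -> exists M, forall t, M <= t -> Rabs (S t) < eps).

(* P(tau >= t) is the left limit of S at t. *)
Definition tail_ge (S : R -> R) (t : R) (p : R) : Prop :=
  forall eps, 0 < eps -> exists d, 0 < d /\
    forall u, t - d < u < t -> Rabs (S u - p) < eps.

(* E(tau) = int_0^oo P(tau > t) dt (improper Riemann integral), finite and = m. *)
Definition has_mean (S : R -> R) (m : R) : Prop :=
  exists pr : (forall b, Riemann_integrable S 0 b),
    forall eps, 0 < eps -> exists M, forall b, M <= b ->
      Rabs (RiemannInt (pr b) - m) < eps.

(* Since S is nonincreasing, the integral of S over [k t, (k+1) t] is at most
   t S(k t), and submultiplicativity gives S(k t) <= S(t)^k.  Summing the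
   geometric series, E(tau) <= t / (1 - S t), i.e. P(tau <= t) <= t / E(tau).
   This is already stronger than the claim, since P(tau < t) <= P(tau <= t)
   and 1 <= e. *)
From Stdlib Require Import Reals Lra.
Open Scope R_scope.

Definition tends_at_infty (f : R -> R) (l : R) : Prop :=
  forall eps, 0 < eps -> exists M, forall b, M <= b -> Rabs (f b - l) < eps.

Lemma tends_at_infty_le (f : R -> R) (l c M0 : R) :
  tends_at_infty f l -> (forall b, M0 <= b -> f b <= c) -> l <= c.
Proof.
  intros Hf Hc. destruct (Rle_or_lt l c) as [|Hlt]; [assumption|].
  destruct (Hf ((l - c) / 2) ltac:(lra)) as [M HM].
  specialize (HM (Rmax M M0) (Rmax_l _ _)). apply Rabs_def2 in HM.
  specialize (Hc (Rmax M M0) (Rmax_r _ _)). lra.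
Qed.

Lemma tends_at_infty_ge (f : R -> R) (l c M0 : R) :
  tends_at_infty f l -> (forall b, M0 <= b -> c <= f b) -> c <= l.
Proof.
  intros Hf Hc. destruct (Rle_or_lt c l) as [|Hlt]; [assumption|].
  destruct (Hf ((c - l) / 2) ltac:(lra)) as [M HM].
  specialize (HM (Rmax M M0) (Rmax_l _ _)). apply Rabs_def2 in HM.
  specialize (Hc (Rmax M M0) (Rmax_r _ _)). lra.
Qed.

Lemma tail_ge_lower_bound (S : R -> R) (t p : R) :
  (forall x y, x <= y -> S y <= S x) -> tail_ge S t p -> S t <= p.
Proof.
  intros Hmono Htail. destruct (Rle_or_lt (S t) p) as [|Hlt]; [assumption|].
  destruct (Htail ((S t - p) / 2) ltac:(lra)) as [d [Hd Hu]].
  specialize (Hu (t - d / 2) ltac:(lra)). apply Rabs_def2 in Hu.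
  pose proof (Hmono (t - d / 2) t ltac:(lra)). lra.
Qed.

Section NonincreasingIntegrand.

Variable S : R -> R.
Hypothesis S_nonincreasing : forall x y, x <= y -> S y <= S x.
Variable pr : forall b, Riemann_integrable S 0 b.
Let I b := RiemannInt (pr b).

Lemma RiemannInt_0 : I 0 = 0.
Proof. apply RiemannInt_P9. Qed.

Lemma RiemannInt_increment_le a b : 0 <= a <= b -> I b - I a <= (b - a) * S a.
Proof.
  intros [Ha Hab]. unfold I.
  pose proof (RiemannInt_P23 (pr b) (conj Ha Hab)) as pab.
  rewrite <- (RiemannInt_P26 (pr a) pab (pr b)).
  pose proof (RiemannInt_P14 a b (S a)) as pc.
  assert (H := RiemannInt_P19 pab pc Hab).
  rewrite (RiemannInt_P15 pc) in H.
  enough (RiemannInt pab <= S a * (b - a)) by lra.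
  apply H. intros x Hx. apply S_nonincreasing. lra.
Qed.

Lemma RiemannInt_increment_ge a b : 0 <= a <= b -> (b - a) * S b <= I b - I a.
Proof.
  intros [Ha Hab]. unfold I.
  pose proof (RiemannInt_P23 (pr b) (conj Ha Hab)) as pab.
  rewrite <- (RiemannInt_P26 (pr a) pab (pr b)).
  pose proof (RiemannInt_P14 a b (S b)) as pc.
  assert (H := RiemannInt_P19 pc pab Hab).
  rewrite (RiemannInt_P15 pc) in H.
  enough (S b * (b - a) <= RiemannInt pab) by lra.
  apply H. intros x Hx. apply S_nonincreasing. lra.
Qed.

Hypothesis S_bounds : forall t, 0 <= S t <= 1.

Lemma RiemannInt_nondecreasing a b : 0 <= a <= b -> I a <= I b.
Proof.
  intros Hab. pose proof (RiemannInt_increment_ge a b Hab).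
  pose proof (S_bounds b). nra.
Qed.

Lemma mean_pos :
  S 0 = 1 ->
  (forall eps, 0 < eps -> exists d, 0 < d /\
     forall u, 0 <= u < d -> Rabs (S u - S 0) < eps) ->
  forall m, tends_at_infty I m -> 0 < m.
Proof.
  intros S0 Hrc m Hm.
  destruct (Hrc (1 / 2) ltac:(lra)) as [d [Hd Hu]].
  set (c := d / 2).
  assert (Sc : 1 / 2 < S c).
  { specialize (Hu c ltac:(unfold c; lra)). apply Rabs_def2 in Hu. lra. }
  assert (Ic : c / 2 <= I c).
  { pose proof (RiemannInt_increment_ge 0 c ltac:(unfold c; lra)) as H.
    rewrite RiemannInt_0 in H. unfold c in *. nra. }
  enough (c / 2 <= m) by (unfold c in *; lra).
  apply (tends_at_infty_ge I m (c / 2) c Hm).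
  intros b Hb. pose proof (RiemannInt_nondecreasing c b ltac:(unfold c in *; lra)).
  lra.
Qed.

Hypothesis S_0 : S 0 = 1.
Hypothesis S_submultiplicative :
  forall t s, 0 <= t -> 0 <= s -> S (t + s) <= S t * S s.

Lemma S_mult_le_pow (t : R) (n : nat) : 0 <= t -> S (INR n * t) <= S t ^ n.
Proof.
  intros Ht. induction n as [|n IH].
  - simpl. rewrite Rmult_0_l, S_0. lra.
  - rewrite S_INR, Rmult_plus_distr_r, Rmult_1_l; simpl pow.
    pose proof (pos_INR n).
    pose proof (S_submultiplicative (INR n * t) t ltac:(nra) Ht).
    pose proof (S_bounds (INR n * t)). pose proof (S_bounds t). nra.
Qed.

Lemma RiemannInt_mult_le_geometric (t : R) (n : nat) :
  0 <= t -> (1 - S t) * I (INR n * t) <= t * (1 - S t ^ n).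
Proof.
  intros Ht. pose proof (S_bounds t) as St.
  induction n as [|n IH].
  - simpl. rewrite Rmult_0_l, RiemannInt_0. lra.
  - pose proof (pos_INR n).
    pose proof (RiemannInt_increment_le (INR n * t) (INR (Datatypes.S n) * t)) as Hstep.
    rewrite S_INR in *. simpl pow.
    specialize (Hstep ltac:(split; nra)).
    replace ((INR n + 1) * t - INR n * t) with t in Hstep by ring.
    pose proof (S_mult_le_pow t n Ht).
    assert (t * S (INR n * t) <= t * S t ^ n) by (apply Rmult_le_compat_l; lra).
    assert (Hinc : (1 - S t) * (I ((INR n + 1) * t) - I (INR n * t))
                   <= (1 - S t) * (t * S t ^ n))
      by (apply Rmult_le_compat_l; lra).
    nra.
Qed.

Lemma RiemannInt_le_geometric (t b : R) :
  0 < t -> 0 <= b -> (1 - S t) * I b <= t.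
Proof.
  intros Ht Hb. pose proof (S_bounds t).
  destruct (INR_unbounded (b / t)) as [n Hn].
  assert (Hbn : b <= INR n * t).
  { apply Rmult_gt_compat_r with (r := t) in Hn; [|lra].
    unfold Rdiv in Hn. rewrite Rmult_assoc, Rinv_l in Hn by lra. lra. }
  pose proof (RiemannInt_nondecreasing b (INR n * t) ltac:(lra)).
  pose proof (RiemannInt_mult_le_geometric t n ltac:(lra)).
  pose proof (pow_le (S t) n ltac:(lra)).
  assert ((1 - S t) * I b <= (1 - S t) * I (INR n * t))
    by (apply Rmult_le_compat_l; lra).
  nra.
Qed.

Lemma mean_le_geometric (t m : R) :
  0 < t -> tends_at_infty I m -> (1 - S t) * m <= t.
Proof.
  intros Ht Hm. pose proof (S_bounds t).
  destruct (Req_dec (S t) 1) as [->|Hq]; [lra|].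
  set (c := t / (1 - S t)).
  assert (Hc : (1 - S t) * c = t) by (unfold c; field; lra).
  enough (m <= c) by nra.
  apply (tends_at_infty_le I m c 0 Hm). intros b Hb.
  pose proof (RiemannInt_le_geometric t b Ht Hb). nra.
Qed.

End NonincreasingIntegrand.

Theorem mainTheorem8 (S : R -> R) (m : R) (G : R -> R) :
  survival_pos S ->
  has_mean S m ->
  (* G t = P(tau >= t) *)
  (forall t, tail_ge S t (G t)) ->
  continuity G ->
  (forall t s, 0 <= t -> 0 <= s -> S (t + s) <= S t * S s) ->
  forall t, 0 < t -> 1 - G t <= exp 1 * t / m.
Proof.
  intros [Hbounds [Hmono [Hle0 [Hrc _]]]] [pr Hm] Htail _ Hsub t Ht.
  assert (S0 : S 0 = 1) by (apply Hle0; lra).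
  assert (Hrc0 : forall eps, 0 < eps -> exists d, 0 < d /\
                   forall u, 0 <= u < d -> Rabs (S u - S 0) < eps).
  { intros eps Heps. destruct (Hrc 0 eps Heps) as [d [Hd Hu]].
    exists d. split; [exact Hd|]. intros u Hu'. apply Hu. lra. }
  pose proof (mean_pos S Hmono pr Hbounds S0 Hrc0 m Hm) as Hmpos.
  pose proof (mean_le_geometric S Hmono pr Hbounds S0 Hsub t m Ht Hm) as Hmean.
  pose proof (tail_ge_lower_bound S t (G t) Hmono (Htail t)) as HG.
  pose proof (exp_ineq1 1 ltac:(lra)) as He.
  assert (Hdiv : m * (exp 1 * t / m) = exp 1 * t) by (field; lra).
  nra.
Qed.
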